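(* For all non-negative integers $\beta$ and $k$, let $$X := \{(\alpha, l) \in \mathbb{Z}^2 : 0 \leq \alpha \leq \beta,\ 0 \leq l \leq k,\ (\alpha,l) \neq (\beta, k),\ (q-1) \mid (\beta + k -(\alpha + l)) \}.$$ Then $L(\chi_t^0, 0) = 1$, and $$L(\chi_t^\beta,-k) = 1 - \sum_{(\alpha,l) \in X}{\beta \choose \alpha}{k \choose l}t^\alpha \theta^l\, L(\chi_t^\alpha, -l).$$
   Context: Let $q$ be a power of a prime $p$, $A=\mathbb{F}_q[\theta]$, and $A_+(d)$ the set of monic polynomials in $A$ of degree $d$. Let $t$ be an indeterminate and $\chi_t:A\to\mathbb{F}_q[t]$ the $\mathbb{F}_q$-algebra morphism with $\theta\mapsto t$; $\chi_t(a)^0:=1$. For non-negative integers $\beta,k,d$ let $S_d(\chi_t^\beta,k):=\sum_{a\in A_+(d)}\chi_t(a)^\beta a^k\in A[t]$. It is known that $S_d(\chi_t^\beta,k)=0$ for all sufficiently large $d$, so $z(\chi_t^\beta,x,-k):=\sum_{d\ge0}x^{-d}S_d(\chi_t^\beta,k)$ is a polynomial in $x^{-1}$ over $A[t]$, and one defines $L(\chi_t^\beta,-k):=z(\chi_t^\beta,1,-k)=\sum_{d\ge 0}S_d(\chi_t^\beta,k)\in A[t]$. *)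

From HB Require Import structures.
From mathcomp Require Import all_boot all_order all_algebra.
From Stdlib Require Import ClassicalEpsilon.
Set Implicit Arguments. Unset Strict Implicit. Unset Printing Implicit Defensive.
Import GRing.Theory.
Local Open Scope ring_scope.

(* F : finite field F_q, q = #|F|.  A = F_q[theta] = {poly F}.
   A[t] = {poly {poly F}}: outer variable t = 'X, inner variable theta. *)

Section Carlitz.
Variable F : finFieldType.

Definition Apt := {poly {poly F}}.

Definition tvar : Apt := 'X.
Definition theta : Apt := ('X : {poly F})%:P.

(* chi_t : A -> F_q[t] subset A[t], theta |-> t *)
Definition chi_t (a : {poly F}) : Apt := map_poly polyC a.

(* The monic polynomial of degree d with lower coefficients c;
   c ranges over {ffun 'I_d -> F}, giving a bijection onto A_+(d). *)
Definition monic_of (d : nat) (c : {ffun 'I_d -> F}) : {poly F} :=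
  'X^d + \sum_(i < d) c i *: 'X^i.

Definition Ssum (beta k d : nat) : Apt :=
  \sum_(c : {ffun 'I_d -> F})
     chi_t (monic_of c) ^+ beta * ((monic_of c) ^+ k)%:P.

(* A bound N beyond which S_d vanishes (exists by the known result). *)
Definition Lbound (beta k : nat) : nat :=
  epsilon (inhabits 0%N) (fun N => forall d, (N <= d)%N -> Ssum beta k d = 0).

Definition Lval (beta k : nat) : Apt :=
  \sum_(d < Lbound beta k) Ssum beta k d.

End Carlitz.

(* Write a monic [a] of degree [d+1] as [a = theta m + x] with [m] monic of
   degree [d] and [x] in [F_q].  The binomial theorem expands [chi_t(a)^b a^k]
   into the terms [x^((b-a')+(k-l)) chi_t(m)^a' m^l], and summing over [x] with
   [sum_x x^n = -1] if [0 < n] and [(q-1) | n], [0] otherwise, gives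
     [S_(d+1)(b,k) = - sum_((a',l) in X) C(b,a') C(k,l) t^a' theta^l S_d(a',l)].
   Hence [S_d(b,k) = 0] for [d > b + k], and summing the recursion over [d],
   with [S_0 = 1], yields the formula for [L]. *)

From HB Require Import structures.
From mathcomp Require Import all_boot all_order all_algebra all_fingroup all_solvable all_field.
From mathcomp Require Import zify ring.
From Stdlib Require Import ClassicalEpsilon.
Import GRing.Theory.
Local Open Scope ring_scope.

Section PowerSums.
Variable F : finFieldType.
Local Notation q := #|F|.

Lemma natr_card_finField : q%:R = 0 :> F.
Proof.
(* [expg_cardG] in the additive group of [F], where [1 ^+ q] is [q%:R]. *)
by have := @expg_cardG _ [set: F] 1%R (in_setT _); rewrite cardsT => card_1; exact: card_1.
Qed.

Lemma expf_card_sub1 (x : F) : x != 0 -> x ^+ (q - 1) = 1.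
Proof.
move=> x_nz; apply: (mulfI x_nz); rewrite -exprS mulr1.
by rewrite subn1 prednK ?expf_card // (ltnW (finNzRing_gt1 F)).
Qed.

Lemma expf_modn (x : F) m : x != 0 -> x ^+ m = x ^+ (m %% (q - 1)).
Proof.
move=> x_nz; rewrite {1}(divn_eq m (q - 1)) exprD mulnC exprM.
by rewrite expf_card_sub1 // expr1n mul1r.
Qed.

Lemma exists_expf_neq1 m : ~~ (q - 1 %| m)%N -> exists2 y : F, y != 0 & y ^+ m != 1.
Proof.
move=> ndvd_m; apply/exists_inP; apply: contraT; rewrite negb_exists_in.
move=> /forall_inP /= all_roots; set r := (m %% (q - 1))%N.
have r_gt0 : (0 < r)%N by rewrite lt0n.
have r_lt : (r < q - 1)%N by rewrite ltn_mod subn_gt0 finNzRing_gt1.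
have pnz : ('X^r - 1 : {poly F}) != 0 by rewrite -size_poly_eq0 size_XnsubC.
have := max_poly_roots pnz (rs := enum (predC1 (0 : F))).
rewrite size_XnsubC // enum_uniq -cardE cardC1 subn1 in r_lt *.
suff -> : all (root ('X^r - 1)) (enum (predC1 (0 : F))).
  by move=> /(_ isT isT); rewrite ltnS leqNgt r_lt.
apply/allP => x; rewrite mem_enum => x_nz.
have := all_roots x x_nz; rewrite negbK => /eqP xm1.
by rewrite rootE !hornerE -/r -expf_modn // xm1 subrr.
Qed.

Lemma sum_expf m :
  \sum_(x : F) x ^+ m = if (0 < m)%N && (q - 1 %| m)%N then -1 else 0.
Proof.
case: m => [|m] /=.
  by rewrite (eq_bigr (fun=> 1)) ?sumr_const ?cardT -?cardE ?natr_card_finField.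
case: ifP => [dvd_m | /negbT ndvd_m].
  rewrite (bigD1 0) //= expr0n add0r (eq_bigr (fun=> 1)); last first.
    by move=> x x_nz; rewrite expf_modn // (eqP dvd_m) expr0.
  rewrite sumr_const cardC1 -subn1 natrB ?natr_card_finField ?sub0r //.
  exact: ltnW (finNzRing_gt1 F).
have [y y_nz ym_neq1] := exists_expf_neq1 _ ndvd_m.
have sum_scale : \sum_(x : F) x ^+ m.+1 = y ^+ m.+1 * \sum_(x : F) x ^+ m.+1.
  by rewrite mulr_sumr (reindex_inj (mulfI y_nz)); apply: eq_bigr => x _; rewrite exprMn.
apply/eqP; have : (1 - y ^+ m.+1) * \sum_(x : F) x ^+ m.+1 == 0.
  by rewrite mulrBl mul1r -sum_scale subrr.
by rewrite mulf_eq0 subr_eq0 eq_sym (negbTE ym_neq1).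
Qed.

End PowerSums.

Section FfunCons.
Variable T : finType.

Definition ffun_cons {d} (x : T) (c : {ffun 'I_d -> T}) : {ffun 'I_d.+1 -> T} :=
  [ffun i => if unlift ord0 i is Some j then c j else x].

Lemma sum_ffun_cons (V : nmodType) d (G : {ffun 'I_d.+1 -> T} -> V) :
  \sum_c G c = \sum_x \sum_(c : {ffun 'I_d -> T}) G (ffun_cons x c).
Proof.
rewrite pair_bigA (reindex (fun xc => ffun_cons xc.1 xc.2)) //.
exists (fun c : {ffun 'I_d.+1 -> T} => (c ord0, [ffun j => c (lift ord0 j)])).
  case=> x c _; rewrite /ffun_cons ffunE unlift_none; congr pair.
  by apply/ffunP => j; rewrite !ffunE liftK.
move=> c _; apply/ffunP => i; rewrite /ffun_cons ffunE /=.
by case: unliftP => [j ->|->]; rewrite ?ffunE.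
Qed.

End FfunCons.

Arguments ffun_cons {T d}.

Section PowerSumRecursion.
Variable F : finFieldType.

Definition twisted_pow (b k : nat) (a : {poly F}) : Apt F := chi_t a ^+ b * (a ^+ k)%:P.

Lemma Ssum0 b k : Ssum F b k 0 = 1.
Proof.
rewrite /Ssum (eq_bigr (fun=> 1)) ?sumr_const ?card_ffun ?card_ord //.
by move=> c _; rewrite /monic_of big_ord0 addr0 /chi_t rmorph1 !expr1n mul1r.
Qed.

Lemma monic_of_cons d x (c : {ffun 'I_d -> F}) :
  monic_of (ffun_cons x c) = 'X * monic_of c + x%:P.
Proof.
rewrite /monic_of big_ord_recl /ffun_cons ffunE unlift_none /=.
under eq_bigr => i _ do rewrite ffunE liftK /bump leq0n add1n exprS scalerAr.
by rewrite mulrDr mulr_sumr -exprS expr0 alg_polyC [x%:P + _]addrC addrA.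
Qed.

Lemma twisted_pow_mulX_addC b k (m : {poly F}) (x : F) :
  twisted_pow b k ('X * m + x%:P) =
  \sum_(a < b.+1) \sum_(l < k.+1)
     ('C(b, a) * 'C(k, l))%:R * tvar F ^+ a * theta F ^+ l
       * (x ^+ (b - a + (k - l)))%:P%:P * twisted_pow a l m.
Proof.
rewrite /twisted_pow.
have -> : chi_t ('X * m + x%:P) = x%:P%:P + tvar F * chi_t m.
  by rewrite /chi_t rmorphD rmorphM /= map_polyX map_polyC addrC.
have -> : (('X * m + x%:P) ^+ k)%:P = (x%:P%:P + theta F * m%:P) ^+ k :> Apt F.
  by rewrite rmorphXn rmorphD rmorphM addrC.
rewrite !exprDn mulr_suml; apply: eq_bigr => a _.
rewrite mulr_sumr; apply: eq_bigr => l _.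
rewrite exprD !rmorphM /= !rmorphXn /= !exprMn.
ring.
Qed.

Lemma SsumS b k d :
  Ssum F b k d.+1 =
  - \sum_(a < b.+1)
      \sum_(l < k.+1 | ((nat_of_ord a, nat_of_ord l) != (b, k))
                       && ((#|F| - 1)%N %| (b + k - (a + l)))%N)
        ('C(b, a) * 'C(k, l))%:R * tvar F ^+ a * theta F ^+ l * Ssum F a l d.
Proof.
rewrite /Ssum sum_ffun_cons.
under eq_bigr => x _ do under eq_bigr => c _ do
  rewrite monic_of_cons -[chi_t _ ^+ _ * _]/(twisted_pow _ _ _) twisted_pow_mulX_addC.
under eq_bigr do rewrite exchange_big.
rewrite exchange_big -sumrN; apply: eq_bigr => a _.
under eq_bigr do rewrite exchange_big.
rewrite exchange_big [in RHS]big_mkcond -sumrN; apply: eq_bigr => l _ /=.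
under eq_bigr do rewrite -mulr_sumr.
rewrite -mulr_suml -mulr_sumr -!rmorph_sum /= sum_expf.
have [le_ab le_lk] : (a <= b)%N /\ (l <= k)%N by split; rewrite -ltnS.
have -> : (b + k - (a + l) = b - a + (k - l))%N by lia.
have -> : (0 < b - a + (k - l))%N = ((nat_of_ord a, nat_of_ord l) != (b, k)).
  by rewrite xpair_eqE; apply/idP/idP; lia.
case: ifP => _; last by rewrite !rmorph0 mulr0 mul0r oppr0.
by rewrite !rmorphN !rmorph1 mulrN1 mulNr.
Qed.

Lemma Ssum_eq0 b k d : (b + k < d)%N -> Ssum F b k d = 0.
Proof.
elim: d b k => [//|d IHd] b k lt_bk_d.
rewrite SsumS big1 ?oppr0 // => a _; rewrite big1 // => l /andP[neq_al_bk _].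
have [le_ab le_lk] : (a <= b)%N /\ (l <= k)%N by split; rewrite -ltnS.
rewrite IHd ?mulr0 //; move: neq_al_bk; rewrite xpair_eqE; lia.
Qed.

End PowerSumRecursion.

Lemma big_ord_widen_eventually0 (V : nmodType) (f : nat -> V) n m :
  (forall i, (n <= i)%N -> f i = 0) -> (n <= m)%N ->
  \sum_(i < n) f i = \sum_(i < m) f i.
Proof.
move=> f_eq0 le_nm; rewrite (big_ord_widen m f le_nm) big_mkcond.
by apply: eq_bigr => i _; case: ltnP => // /f_eq0 ->.
Qed.

Arguments big_ord_widen_eventually0 {V f n} m.

Lemma LvalE (F : finFieldType) b k n :
  (b + k < n)%N -> Lval F b k = \sum_(d < n) Ssum F b k d.
Proof.
move=> lt_bk_n; have Ssum_tail : exists N, forall d, (N <= d)%N -> Ssum F b k d = 0.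
  by exists (b + k).+1 => d; apply: Ssum_eq0.
have := epsilon_spec (inhabits 0%N) _ Ssum_tail; rewrite -/(Lbound F b k) => Lbound_tail.
have Ssum_from_n d : (n <= d)%N -> Ssum F b k d = 0.
  by move=> le_nd; apply/Ssum_eq0/(leq_trans lt_bk_n).
rewrite /Lval (big_ord_widen_eventually0 (maxn (Lbound F b k) n) Lbound_tail) ?leq_maxl //.
by rewrite -(big_ord_widen_eventually0 _ Ssum_from_n) ?leq_maxr.
Qed.

Theorem corollary2p0p2 (F : finFieldType) (beta k : nat) :
  Lval F 0 0 = 1 /\
  Lval F beta k =
    1 - \sum_(alpha < beta.+1)
          \sum_(l < k.+1 | ((nat_of_ord alpha, nat_of_ord l) != (beta, k))
                           && ((#|F| - 1)%N %| (beta + k - (alpha + l)))%N)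
            ('C(beta, alpha) * 'C(k, l))%:R * tvar F ^+ alpha * theta F ^+ l
              * Lval F alpha l.
Proof.
split; first by rewrite (@LvalE F 0 0 1) // big_ord1 Ssum0.
rewrite (@LvalE F beta k (beta + k).+2) // big_ord_recl Ssum0.
under eq_bigr do rewrite lift0 SsumS.
rewrite sumrN; congr (_ - _).
rewrite exchange_big; apply: eq_bigr => a _.
rewrite exchange_big; apply: eq_bigr => l _.
by rewrite -mulr_sumr (@LvalE F a l (beta + k).+1) // ltnS leq_add // -ltnS.
Qed.
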